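(* Let $\mathcal H$ be a real Hilbert space. Let $(T_i)_{i\in I}$ be a finite family of nonexpansive operators from $\mathcal H$ to $\mathcal H$ such that $\bigcap_{i\in I}\mathrm{Fix}\,T_i\neq\varnothing$, and let $(\alpha_i)_{i\in I}$ be real numbers in $\left]0,1\right[$ such that, for every $i\in I$, $T_i$ is $\alpha_i$-averaged. Let $p$ be a strictly positive integer, for every $k\in\{1,\ldots,p\}$ let $m_k$ be a strictly positive integer and let $\omega_k\in\left]0,1\right]$, and suppose that $\mathrm{i}\colon\{(k,l)\mid k\in\{1,\ldots,p\},\,l\in\{1,\ldots,m_k\}\}\to I$ is surjective and that $\sum_{k=1}^{p}\omega_k=1$. Define $$T=\sum_{k=1}^{p}\omega_kT_{\mathrm{i}(k,1)}\cdots T_{\mathrm{i}(k,m_k)}.$$ Then: (i) Setting $$\alpha=\sum_{k=1}^{p}\dfrac{\omega_k}{1+\dfrac{1}{\sum_{i=1}^{m_k}\dfrac{\alpha_{\mathrm{i}(k,i)}}{1-\alpha_{\mathrm{i}(k,i)}}}},$$ $T$ is $\alpha$-averaged and $\mathrm{Fix}\,T=\bigcap_{i\in I}\mathrm{Fix}\,T_i$. (ii) Let $(\lambda_n)_{n\in\mathbb N}$ be a sequence in $\left]0,1/\alpha\right[$ (with $\alpha$ as in (i)) such that $\sum_{n\in\mathbb N}\lambda_n(1/\alpha-\lambda_n)=+\infty$, let $x_0\in\mathcal H$, and set $x_{n+1}=x_n+\lambda_n(Tx_n-x_n)$ for every $n\in\mathbb N$. Then $(x_n)_{n\in\mathbb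 N}$ converges weakly to a point in $\bigcap_{i\in I}\mathrm{Fix}\,T_i$.
   Context: An operator $T\colon D\to\mathcal H$ ($D\subset\mathcal H$ nonempty) is nonexpansive if it is 1-Lipschitz. For $\alpha\in\left]0,1\right[$, a nonexpansive $T$ is $\alpha$-averaged if there exists a nonexpansive $R\colon D\to\mathcal H$ with $T=(1-\alpha)\mathrm{Id}+\alpha R$. $\mathrm{Fix}\,T=\{x\mid Tx=x\}$. *)

From mathcomp Require Import all_boot all_order all_algebra.
From mathcomp Require Import all_classical all_reals all_analysis.
Set Implicit Arguments. Unset Strict Implicit. Unset Printing Implicit Defensive.
Import Order.TTheory GRing.Theory Num.Theory.
Import numFieldNormedType.Exports.
Local Open Scope classical_set_scope.
Local Open Scope ring_scope.

(* A real Hilbert space is modelled as a complete normed space H over a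
   real field R together with an inner product inducing its norm. *)
Definition is_inner_product (R : realType) (H : completeNormedModType R)
  (ip : H -> H -> R) : Prop :=
  [/\ (forall x y, ip x y = ip y x),
      (forall a x y z, ip (a *: x + y) z = a * ip x z + ip y z)
    & (forall x, ip x x = `|x| ^+ 2)].

Definition nonexpansive (R : realType) (H : completeNormedModType R)
  (T : H -> H) : Prop := forall x y, `|T x - T y| <= `|x - y|.

Definition Fix (T0 : Type) (T : T0 -> T0) : set T0 := [set x | T x = x].

Definition averaged (R : realType) (H : completeNormedModType R)
  (alpha : R) (T : H -> H) : Prop :=
  [/\ 0 < alpha < 1, nonexpansive T &
      exists Rop : H -> H, nonexpansive Rop /\
        forall x, T x = (1 - alpha) *: x + alpha *: Rop x].

Definition comp_list (T0 : Type) (s : seq (T0 -> T0)) : T0 -> T0 :=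
  foldr (fun f g => f \o g) id s.

(* T_{i(k,1)} ... T_{i(k,m_k)}  (indices shifted to start at 0) *)
Definition block_comp (R : realType) (H : completeNormedModType R)
  (I : finType) (T : I -> H -> H) (p : nat) (m : 'I_p -> nat)
  (idx : forall k : 'I_p, 'I_(m k) -> I) (k : 'I_p) : H -> H :=
  comp_list [seq T (idx k l) | l <- enum 'I_(m k)].

Definition Tbar (R : realType) (H : completeNormedModType R)
  (I : finType) (T : I -> H -> H) (p : nat) (m : 'I_p -> nat)
  (idx : forall k : 'I_p, 'I_(m k) -> I) (omega : 'I_p -> R) : H -> H :=
  fun x => \sum_(k < p) omega k *: block_comp T idx k x.

Definition alpha_bar (R : realType) (I : finType) (a : I -> R)
  (p : nat) (m : 'I_p -> nat) (idx : forall k : 'I_p, 'I_(m k) -> I)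
  (omega : 'I_p -> R) : R :=
  \sum_(k < p) omega k /
     (1 + 1 / (\sum_(l < m k) a (idx k l) / (1 - a (idx k l)))).

Definition weak_cvg (R : realType) (H : completeNormedModType R)
  (ip : H -> H -> R) (x : nat -> H) (z : H) : Prop :=
  forall y, (fun n => ip (x n) y) @ \oo --> ip z y.

From mathcomp Require Import all_boot all_order all_algebra.
From mathcomp Require Import all_classical all_reals all_analysis.
From mathcomp Require Import ring lra.
Set Implicit Arguments. Unset Strict Implicit. Unset Printing Implicit Defensive.
Import Order.TTheory GRing.Theory Num.Theory.
Import numFieldNormedType.Exports.
Local Open Scope classical_set_scope.
Local Open Scope ring_scope.

(* An a-averaged map S is exactly a nonexpansive map satisfying
     k |Sx - Sy|^2 + |(x - Sx) - (y - Sy)|^2 <= k |x - y|^2,  k = a / (1 - a).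
   The constants k add up along compositions, and a convex combination of
   averaged maps is averaged with the same convex combination of constants:
   this gives the constant alpha of (i).  The same inequality forces a fixed
   point of a composition, or of a convex combination, of such maps with a
   common fixed point to be fixed by every factor.
   For (ii), the relaxed iteration of T is a Krasnosel'skii-Mann iteration of
   the nonexpansive part of T; it is Fejer monotone with respect to Fix T and
   asymptotically regular.  Weak convergence then follows from Opial's argument
   phrased with asymptotic centres, which avoids weak compactness: the
   asymptotic centre of the sequence and that of any subsequence are fixed
   points, Fejer monotonicity makes the former a centre of the subsequence as
   well, and a centre cannot be improved by moving it, which rules out a
   subsequence drifting away in any direction. *)

Definition limsup_le (R : realType) (u : nat -> R) (c : R) :=
  forall e, 0 < e -> exists N, forall n, (N <= n)%N -> u n <= c + e.

Section RealNumbers.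
Variable R : realType.
Implicit Types (u : nat -> R) (c : R).

Lemma limsup_le_trans u c d : limsup_le u c -> c <= d -> limsup_le u d.
Proof.
move=> hu cd e e0; have [N hN] := hu e e0; exists N => n /hN; lra.
Qed.

Lemma limsup_le_ge0 u c : (forall n, 0 <= u n) -> limsup_le u c -> 0 <= c.
Proof.
move=> u0 hu; apply/ler_addgt0Pr => e e0.
by have [N hN] := hu e e0; apply: le_trans (u0 N) (hN N _).
Qed.

Lemma limsup_le_approx u c K : 0 < K ->
  (forall d, 0 < d <= 1 -> limsup_le u (c + d * K)) -> limsup_le u c.
Proof.
move=> K0 hu e e0.
set d := Num.min 1 (e / (2 * K)).
have d0 : 0 < d by rewrite lt_min ltr01 divr_gt0 ?mulr_gt0.
have dK : d * K <= e / 2.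
  by rewrite -ler_pdivlMr // -mulrA -invfM ge_min lexx orbT.
have d1 : d <= 1 by rewrite ge_min lexx.
have [N hN] : exists N, forall n, (N <= n)%N -> u n <= c + d * K + e / 2.
  by apply: hu; rewrite ?d0 ?d1 ?divr_gt0.
by exists N => n /hN; lra.
Qed.

Lemma limsup_le_subseq u c (phi : nat -> nat) : (forall n, (n <= phi n)%N) ->
  limsup_le u c -> limsup_le (u \o phi) c.
Proof.
move=> phi_ge hu e e0; have [N hN] := hu e e0; exists N => n hn.
exact/hN/(leq_trans hn).
Qed.

Lemma nonincreasing_limsup_le_subseq u c (phi : nat -> nat) :
  (forall n, u n.+1 <= u n) -> (forall n, (n <= phi n)%N) ->
  limsup_le (u \o phi) c -> limsup_le u c.
Proof.
move=> /nonincreasing_seqP u_noninc phi_ge hu e e0.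
have [N hN] := hu e e0; exists (phi N) => n hn.
exact: le_trans (u_noninc _ _ hn) (hN N _).
Qed.

Lemma not_limsup_le_subseq u c : ~ limsup_le u c ->
  exists e (phi : nat -> nat),
    [/\ 0 < e, forall n, (n <= phi n)%N & forall n, c + e < u (phi n)].
Proof.
move=> /existsNP [e /not_implyP [e0 /forallNP hN]].
have hex N : exists n, (N <= n)%N /\ c + e < u n.
  have /existsNP [n /not_implyP [hn /negP]] := hN N.
  by rewrite -ltNge => ?; exists n.
have [phi hphi] := choice hex.
by exists e, phi; split => // n; case: (hphi n).
Qed.

Lemma cvg_of_limsup_le u l :
  limsup_le (fun n => u n - l) 0 -> limsup_le (fun n => l - u n) 0 ->
  u @ \oo --> l.
Proof.
move=> hup hlo; apply/cvgrPdist_le => e e0.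
have [N1 hN1] := hup e e0; have [N2 hN2] := hlo e e0.
exists (maxn N1 N2) => // n /= hn; rewrite ler_norml.
have := hN1 n (leq_trans (leq_maxl _ _) hn); have := hN2 n (leq_trans (leq_maxr _ _) hn).
lra.
Qed.

Lemma harmonic_le (e : R) : 0 < e -> exists K, forall k, (K <= k)%N -> harmonic k <= e.
Proof.
move=> e0; have /cvgrPdist_le /(_ e e0) [K _ hK] := @cvg_harmonic R.
exists K => k /hK; rewrite /= sub0r normrN ger0_norm //; exact: harmonic_ge0.
Qed.

Lemma nneseries_pinfty_partial_gt (g : nat -> R) : (forall n, 0 <= g n) ->
  (\sum_(n <oo) (g n)%:E = +oo)%E -> forall K, exists N, K < \sum_(n < N) g n.
Proof.
move=> g0 hs K; apply: contrapT => /forallNP hle.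
suff : (+oo <= K%:E)%E by [].
rewrite -hs; apply: lime_le; first by apply: is_cvg_nneseries => n _ _; rewrite lee_fin.
apply: nearW => N; rewrite /= sumEFin lee_fin big_mkord leNgt.
exact/negP/hle.
Qed.

Lemma sumr_ord_gt0 (n : nat) (f : 'I_n -> R) : (0 < n)%N ->
  (forall k, 0 < f k) -> 0 < \sum_k f k.
Proof.
move=> n0 f0; rewrite (bigD1 (Ordinal n0)) //=.
by apply: ltr_wpDr => //; apply: sumr_ge0 => k _; exact/ltW.
Qed.

Lemma sqrD_le_mulD (A B X Y k1 k2 : R) :
  0 <= A -> 0 <= B -> 0 <= k1 -> 0 <= k2 -> 0 <= X -> 0 <= Y ->
  A ^+ 2 <= k2 * X -> B ^+ 2 <= k1 * Y -> (A + B) ^+ 2 <= (k1 + k2) * (X + Y).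
Proof.
move=> A0 B0 k10 k20 X0 Y0 hA hB.
(* AM-GM on the cross term: [(2AB)^2 <= 4 (k1 Y)(k2 X) <= (k1 X + k2 Y)^2]. *)
have hAB : 2 * A * B <= k1 * X + k2 * Y.
  rewrite -ler_sqr ?nnegrE ?(mulr_ge0, addr_ge0) //.
  have : A ^+ 2 * B ^+ 2 <= (k2 * X) * (k1 * Y).
    by apply: ler_pM => //; apply: sqr_ge0.
  have : 0 <= (k1 * X - k2 * Y) ^+ 2 := sqr_ge0 _.
  nra.
nra.
Qed.

End RealNumbers.

Section HilbertSpace.
Variables (R : realType) (H : completeNormedModType R) (ip : H -> H -> R).
Hypothesis ip_inner : is_inner_product ip.

Lemma ipC x y : ip x y = ip y x. Proof. by case: ip_inner. Qed.

Lemma ip_norm x : ip x x = `|x| ^+ 2. Proof. by case: ip_inner. Qed.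

Lemma ip0l z : ip 0 z = 0.
Proof.
by case: ip_inner => _ /(_ 1 0 0 z); rewrite scaler0 addr0 mul1r; lra.
Qed.

Lemma ipDl x y z : ip (x + y) z = ip x z + ip y z.
Proof. by case: ip_inner => _ /(_ 1 x y z); rewrite scale1r mul1r. Qed.

Lemma ipZl a x z : ip (a *: x) z = a * ip x z.
Proof.
by case: ip_inner => _ /(_ a x 0 z); rewrite addr0 ip0l addr0.
Qed.

Lemma ipNl x z : ip (- x) z = - ip x z.
Proof. by rewrite -scaleN1r ipZl mulN1r. Qed.

Lemma ip0r z : ip z 0 = 0. Proof. by rewrite ipC ip0l. Qed.

Lemma ipDr x y z : ip z (x + y) = ip z x + ip z y.
Proof. by rewrite ipC ipDl !(ipC z). Qed.

Lemma ipZr a x z : ip z (a *: x) = a * ip z x.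
Proof. by rewrite ipC ipZl ipC. Qed.

Lemma ipNr x z : ip z (- x) = - ip z x.
Proof. by rewrite ipC ipNl ipC. Qed.

Lemma ipBl x y z : ip (x - y) z = ip x z - ip y z.
Proof. by rewrite ipDl ipNl. Qed.

(* Identities between vectors are proved by expanding the squared norm of
   their difference with [ip_expand] and closing with [ring]. *)
Lemma eq_of_ip_sub u v : ip (u - v) (u - v) = 0 -> u = v.
Proof.
by rewrite ip_norm => /eqP; rewrite sqrf_eq0 normr_eq0 subr_eq0 => /eqP.
Qed.

Ltac ip_expand := rewrite ?(ipDl, ipDr, ipZl, ipZr, ipNl, ipNr, ip0l, ip0r);
  repeat match goal with |- context[ip ?u ?v] =>
    match goal with |- context[ip v u] =>
      assert_fails (unify u v); rewrite [ip v u]ipC end end.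

Lemma sqr_norm_sub_scale (d y : H) (t : R) :
  `|d - t *: y| ^+ 2 = `|d| ^+ 2 - 2 * t * ip d y + t ^+ 2 * `|y| ^+ 2.
Proof. by rewrite -!ip_norm; ip_expand; ring. Qed.

Lemma sqr_norm_midpoint (z u v : H) :
  `|z - 2^-1 *: (u + v)| ^+ 2 =
  (`|z - u| ^+ 2 + `|z - v| ^+ 2) / 2 - `|u - v| ^+ 2 / 4.
Proof. by rewrite -!ip_norm; ip_expand; field. Qed.

Definition averaged_ratio (k : R) (S : H -> H) :=
  nonexpansive S /\ forall x y,
    k * `|S x - S y| ^+ 2 + `|(x - S x) - (y - S y)| ^+ 2 <= k * `|x - y| ^+ 2.

Lemma averaged_ratio_of_averaged a S : averaged a S -> averaged_ratio (a / (1 - a)) S.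
Proof.
case=> /andP[a0 a1] neS [Rop [neR hS]]; split => // x y.
have -> : a / (1 - a) * `|S x - S y| ^+ 2 + `|(x - S x) - (y - S y)| ^+ 2 =
    a / (1 - a) * `|x - y| ^+ 2 +
    a / (1 - a) * a * (`|Rop x - Rop y| ^+ 2 - `|x - y| ^+ 2).
  by rewrite !hS -!ip_norm; ip_expand; field; rewrite subr_eq0 gt_eqF.
rewrite gerDl; apply: mulr_ge0_le0.
  by rewrite mulr_ge0 ?divr_ge0 ?subr_ge0 // ltW.
by rewrite subr_le0 lerXn2r ?nnegrE.
Qed.

Lemma averaged_of_ratio k S : 0 < k -> averaged_ratio k S -> averaged (k / (1 + k)) S.
Proof.
move=> k0 [neS hS]; set a := k / (1 + k).
have a0 : 0 < a by rewrite divr_gt0 // addr_gt0.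
have a1 : a < 1 by rewrite /a ltr_pdivrMr ?addr_gt0 // mul1r ltrDr.
split; [by rewrite a0 a1 | exact: neS|].
exists (fun x => a^-1 *: (S x - (1 - a) *: x)); split; last first.
  by move=> x; rewrite scalerA mulfV ?gt_eqF // scale1r addrC subrK.
move=> x y; rewrite -ler_sqr ?nnegrE //.
have -> : `|a^-1 *: (S x - (1 - a) *: x) - a^-1 *: (S y - (1 - a) *: y)| ^+ 2 =
    `|x - y| ^+ 2 + (1 + k) / k ^+ 2 *
    (k * `|S x - S y| ^+ 2 + `|(x - S x) - (y - S y)| ^+ 2 - k * `|x - y| ^+ 2).
  by rewrite /a -!ip_norm; ip_expand; field; rewrite ?gt_eqF ?addr_gt0.
rewrite gerDl; apply: mulr_ge0_le0.
  by rewrite divr_ge0 ?exprn_ge0 ?addr_ge0 ?ltW.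
by rewrite subr_le0 hS.
Qed.

Lemma averaged_ratio_comp k1 k2 S1 S2 : 0 <= k1 -> 0 <= k2 ->
  averaged_ratio k1 S1 -> averaged_ratio k2 S2 -> averaged_ratio (k1 + k2) (S1 \o S2).
Proof.
move=> k10 k20 [ne1 h1] [ne2 h2]; split=> x y /=.
  exact: le_trans (ne1 _ _) (ne2 _ _).
have eC : (x - S1 (S2 x)) - (y - S1 (S2 y)) =
    ((x - S2 x) - (y - S2 y)) + ((S2 x - S1 (S2 x)) - (S2 y - S1 (S2 y))).
  by apply: eq_of_ip_sub; ip_expand; ring.
have hC := ler_normD ((x - S2 x) - (y - S2 y)) ((S2 x - S1 (S2 x)) - (S2 y - S1 (S2 y))).
rewrite -eC in hC.
move: hC (h2 x y) (h1 (S2 x) (S2 y)) (ne1 (S2 x) (S2 y)) (ne2 x y).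
set A := `|(x - S2 x) - _|; set B := `|(S2 x - _) - _|; set C := `|(x - _) - _|.
set n0 := `|x - y|; set n1 := `|S2 x - S2 y|; set n2 := `|S1 _ - S1 _|.
move=> hC hA hB e1 e2.
have [A0 B0 C0] : [/\ 0 <= A, 0 <= B & 0 <= C] by split; apply: normr_ge0.
have [n00 n10 n20] : [/\ 0 <= n0, 0 <= n1 & 0 <= n2] by split; apply: normr_ge0.
have X0 : 0 <= n0 ^+ 2 - n1 ^+ 2 by rewrite subr_ge0 lerXn2r ?nnegrE.
have Y0 : 0 <= n1 ^+ 2 - n2 ^+ 2 by rewrite subr_ge0 lerXn2r ?nnegrE.
have hCAB : C ^+ 2 <= (A + B) ^+ 2 by rewrite lerXn2r ?nnegrE ?addr_ge0.
have : (A + B) ^+ 2 <= (k1 + k2) * ((n0 ^+ 2 - n1 ^+ 2) + (n1 ^+ 2 - n2 ^+ 2)).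
  by apply: sqrD_le_mulD => //; lra.
lra.
Qed.

Lemma averaged_ratio_id : averaged_ratio 0 id.
Proof. by split=> x y //=; rewrite !subrr normr0 expr0n /= !mul0r addr0. Qed.

Lemma averaged_ratio_comp_list (X : eqType) (s : seq X) (F : X -> H -> H) kap :
  (forall l, l \in s -> 0 <= kap l /\ averaged_ratio (kap l) (F l)) ->
  averaged_ratio (\sum_(l <- s) kap l) (comp_list [seq F l | l <- s]).
Proof.
elim: s => [|l s IH] hs; first by rewrite big_nil; exact: averaged_ratio_id.
have hs' l' : l' \in s -> 0 <= kap l' /\ averaged_ratio (kap l') (F l').
  by move=> hl'; apply: hs; rewrite in_cons hl' orbT.
have [kl0 Fl] := hs l (mem_head _ _).
rewrite big_cons; apply: averaged_ratio_comp => //; last exact: IH.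
by rewrite big_seq; apply: sumr_ge0 => l' /hs' [].
Qed.

Lemma comp_list_fixed (X : eqType) (s : seq X) (F : X -> H -> H) z :
  (forall l, l \in s -> F l z = z) -> comp_list [seq F l | l <- s] z = z.
Proof.
elim: s => [|l s IH] hs //=.
by rewrite IH ?hs ?mem_head // => l' hl'; apply: hs; rewrite in_cons hl' orbT.
Qed.

Lemma comp_list_fixed_each (X : eqType) (s : seq X) (F : X -> H -> H) kap z x :
  (forall l, l \in s -> 0 <= kap l /\ averaged_ratio (kap l) (F l)) ->
  (forall l, l \in s -> F l z = z) ->
  comp_list [seq F l | l <- s] x = x -> forall l, l \in s -> F l x = x.
Proof.
elim: s => [|l s IH] hs hz //= hx.
have hs' l' : l' \in s -> 0 <= kap l' /\ averaged_ratio (kap l') (F l').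
  by move=> hl'; apply: hs; rewrite in_cons hl' orbT.
have hz' l' : l' \in s -> F l' z = z.
  by move=> hl'; apply: hz; rewrite in_cons hl' orbT.
set c := comp_list _ in hx.
have [kl0 [_ hFl]] := hs l (mem_head _ _).
have [nec _] := averaged_ratio_comp_list hs'.
have cz : c z = z := comp_list_fixed hz'.
(* [F l (c x) = x] while [c x] is no farther from [z] than [x]: the ratio
   inequality for [F l] at [c x] and [z] then forces [c x = x]. *)
have cx_z : `|c x - z| ^+ 2 <= `|x - z| ^+ 2.
  by rewrite lerXn2r ?nnegrE // -{1}cz nec.
have := hFl (c x) z; rewrite hx hz ?mem_head // subrr subr0 => hF.
have ecx : c x = x.
  apply/eqP; rewrite -subr_eq0 -normr_eq0 -sqrf_eq0 eq_le sqr_ge0 andbT.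
  have : 0 <= kap l * (`|x - z| ^+ 2 - `|c x - z| ^+ 2) by rewrite mulr_ge0 ?subr_ge0.
  lra.
move=> l'; rewrite in_cons => /orP[/eqP -> | hl']; first by rewrite -{1}ecx hx.
exact: IH hs' hz' ecx l' hl'.
Qed.

Lemma averaged_convex_comb (p : nat) (w al : 'I_p -> R) (S : 'I_p -> H -> H) :
  (0 < p)%N -> (forall k, 0 < w k) -> \sum_k w k = 1 ->
  (forall k, averaged (al k) (S k)) ->
  averaged (\sum_k w k * al k) (fun x => \sum_k w k *: S k x).
Proof.
move=> p0 w0 w1 hS.
have hR k : exists Rk : H -> H, nonexpansive Rk /\
    forall x, S k x = (1 - al k) *: x + al k *: Rk x by case: (hS k).
have [Rf hRf] := choice hR.
have al01 k : 0 < al k < 1 by case: (hS k).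
have wal0 k : 0 < w k * al k by case/andP: (al01 k) => ? _; rewrite mulr_gt0.
set al0 := \sum_k w k * al k.
have al0_gt0 : 0 < al0 by apply: sumr_ord_gt0.
have one_sub_al0 : 1 - al0 = \sum_k w k * (1 - al k).
  by under eq_bigr do rewrite mulrBr mulr1; rewrite sumrB w1.
have al0_lt1 : al0 < 1.
  rewrite -subr_gt0 one_sub_al0; apply: sumr_ord_gt0 => // k.
  by case/andP: (al01 k) => _ ?; rewrite mulr_gt0 ?subr_gt0.
split; first by rewrite al0_gt0 al0_lt1.
  move=> x y; rewrite -sumrB.
  under eq_bigr do rewrite -scalerBr.
  apply: le_trans (ler_norm_sum _ _ _) _.
  rewrite -[X in _ <= X]mul1r -w1 mulr_suml; apply: ler_sum => k _.
  by rewrite normrZ gtr0_norm ?ler_pM2l //; case: (hS k).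
exists (fun x => al0^-1 *: \sum_k (w k * al k) *: Rf k x); split.
  move=> x y; rewrite -scalerBr -sumrB.
  under eq_bigr do rewrite -scalerBr.
  rewrite normrZ gtr0_norm ?invr_gt0 // ler_pdivrMl //.
  apply: le_trans (ler_norm_sum _ _ _) _.
  rewrite /al0 mulr_suml; apply: ler_sum => k _.
  by rewrite normrZ gtr0_norm ?ler_pM2l //; case: (hRf k).
move=> x; rewrite scalerA mulfV ?gt_eqF // scale1r one_sub_al0.
rewrite scaler_suml -big_split /=; apply: eq_bigr => k _.
by case: (hRf k) => _ ->; rewrite scalerDr !scalerA.
Qed.

Lemma sqr_norm_convex_comb_le (p : nat) (w : 'I_p -> R) (v : 'I_p -> H) :
  (forall k, 0 <= w k) -> \sum_k w k = 1 ->
  `|\sum_k w k *: v k| ^+ 2 <= \sum_k w k * `|v k| ^+ 2.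
Proof.
move=> w0 w1; set s := \sum_k w k * `|v k|.
have h1 : `|\sum_k w k *: v k| <= s.
  apply: le_trans (ler_norm_sum _ _ _) _; apply: ler_sum => k _.
  by rewrite normrZ ger0_norm.
(* the variance of [`|v k|] under the weights [w] is nonnegative *)
have h2 : 0 <= \sum_k w k * (`|v k| - s) ^+ 2.
  by apply: sumr_ge0 => k _; rewrite mulr_ge0 ?sqr_ge0.
have e : \sum_k w k * (`|v k| - s) ^+ 2 = \sum_k w k * `|v k| ^+ 2 - s ^+ 2.
  rewrite (eq_bigr (fun k => w k * `|v k| ^+ 2 - (2 * s) * (w k * `|v k|)
     + s ^+ 2 * w k)); last by move=> k _; ring.
  by rewrite big_split /= sumrB -!mulr_sumr w1 -/s; ring.
have s0 : 0 <= s := le_trans (normr_ge0 _) h1.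
have : `|\sum_k w k *: v k| ^+ 2 <= s ^+ 2 by rewrite lerXn2r ?nnegrE.
lra.
Qed.

Lemma convex_comb_fixed_each (p : nat) (w kap : 'I_p -> R) (S : 'I_p -> H -> H) z x :
  (forall k, 0 < w k) -> \sum_k w k = 1 -> (forall k, 0 < kap k) ->
  (forall k, averaged_ratio (kap k) (S k)) -> (forall k, S k z = z) ->
  \sum_k w k *: S k x = x -> forall k, S k x = x.
Proof.
move=> w0 w1 kap0 hS hz hx.
have hQ k : kap k * `|S k x - z| ^+ 2 + `|x - S k x| ^+ 2 <= kap k * `|x - z| ^+ 2.
  by case: (hS k) => _ /(_ x z); rewrite hz subrr subr0.
have exz : x - z = \sum_k w k *: (S k x - z).
  under eq_bigr do rewrite scalerBr.
  by rewrite sumrB -scaler_suml w1 scale1r -{1}hx.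
have := sqr_norm_convex_comb_le (fun k => S k x - z) (fun k => ltW (w0 k)) w1.
rewrite -exz => hJ.
have hsum : \sum_k w k * (`|x - S k x| ^+ 2 / kap k) <= 0.
  apply: le_trans (_ : \sum_k w k * (`|x - z| ^+ 2 - `|S k x - z| ^+ 2) <= _).
    apply: ler_sum => k _; rewrite ler_pM2l // ler_pdivrMr //.
    by have := hQ k; lra.
  under eq_bigr do rewrite mulrBr.
  by rewrite sumrB -mulr_suml w1 mul1r subr_le0.
have term0 k : 0 <= w k * (`|x - S k x| ^+ 2 / kap k).
  by rewrite mulr_ge0 ?divr_ge0 ?sqr_ge0 ?ltW.
move=> k; have /psumr_eq0P /(_ k isT) : \sum_k w k * (`|x - S k x| ^+ 2 / kap k) = 0.
  by apply/eqP; rewrite eq_le hsum sumr_ge0.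
move=> /(_ (fun k _ => term0 k)) /eqP.
rewrite mulf_eq0 (gt_eqF (w0 k)) mulf_eq0 invr_eq0 (gt_eqF (kap0 k)) orbF.
by rewrite sqrf_eq0 normr_eq0 subr_eq0 => /eqP.
Qed.

Section ConvexCombinationOfCompositions.
Variables (I : finType) (T : I -> H -> H) (a : I -> R) (p : nat) (m : 'I_p -> nat).
Variables (idx : forall k : 'I_p, 'I_(m k) -> I) (omega : 'I_p -> R).
Arguments idx : clear implicits.
Hypothesis T_averaged : forall i, averaged (a i) (T i).
Hypothesis m_gt0 : forall k, (0 < m k)%N.
Hypothesis omega_gt0 : forall k, 0 < omega k.
Hypothesis omega_sum1 : \sum_k omega k = 1.

Let ratio i := a i / (1 - a i).

Let ratio_gt0 i : 0 < ratio i.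
Proof.
by case: (T_averaged i) => /andP[a0 a1] _ _; rewrite divr_gt0 // subr_gt0.
Qed.

Let block_ratio k := \sum_(l < m k) ratio (idx k l).

Let block_ratio_gt0 k : 0 < block_ratio k.
Proof. exact: sumr_ord_gt0. Qed.

Let block_ratio_spec k : forall l, l \in enum 'I_(m k) ->
  0 <= ratio (idx k l) /\ averaged_ratio (ratio (idx k l)) (T (idx k l)).
Proof. by move=> l _; split; [exact/ltW | exact: averaged_ratio_of_averaged]. Qed.

Lemma averaged_ratio_block_comp k : averaged_ratio (block_ratio k) (block_comp T idx k).
Proof.
by rewrite /block_ratio -big_enum; apply: averaged_ratio_comp_list; exact: block_ratio_spec.
Qed.

Lemma averaged_Tbar : (0 < p)%N -> averaged (alpha_bar a idx omega) (Tbar T idx omega).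
Proof.
move=> p0.
have -> : alpha_bar a idx omega = \sum_k omega k * (block_ratio k / (1 + block_ratio k)).
  apply: eq_bigr => k _; have := block_ratio_gt0 k; rewrite /block_ratio => hk.
  by field; rewrite ?gt_eqF ?addr_gt0.
apply: averaged_convex_comb => // k.
exact: averaged_of_ratio (block_ratio_gt0 k) (averaged_ratio_block_comp k).
Qed.

Lemma Fix_Tbar : (\bigcap_i Fix (T i)) !=set0 ->
  (forall i, exists k l, idx k l = i) ->
  Fix (Tbar T idx omega) = \bigcap_i Fix (T i).
Proof.
move=> [z hz] idx_surj; have block_z k : block_comp T idx k z = z.
  by apply: comp_list_fixed => l _; exact: hz.
rewrite eqEsubset; split=> x hx; last first.
  have block_x k : block_comp T idx k x = x.
    by apply: comp_list_fixed => l _; exact: hx.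
  rewrite /Fix /= /Tbar; under eq_bigr do rewrite block_x.
  by rewrite -scaler_suml omega_sum1 scale1r.
have block_x := convex_comb_fixed_each omega_gt0 omega_sum1 block_ratio_gt0
  averaged_ratio_block_comp block_z hx.
move=> i _; have [k [l <-]] := idx_surj i.
apply: (comp_list_fixed_each (block_ratio_spec (k := k)) _ (block_x k)).
  by move=> l' _; exact: hz.
by rewrite mem_enum.
Qed.

End ConvexCombinationOfCompositions.

Definition asymptotic_center (z : nat -> H) (A : H) (M : R) :=
  limsup_le (fun n => `|z n - A| ^+ 2) M /\
  forall u c, limsup_le (fun n => `|z n - u| ^+ 2) c -> M <= c.

Section AsymptoticCenter.
Variable z : nat -> H.

Lemma limsup_le_midpoint u v c d :
  limsup_le (fun n => `|z n - u| ^+ 2) c -> limsup_le (fun n => `|z n - v| ^+ 2) d ->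
  limsup_le (fun n => `|z n - 2^-1 *: (u + v)| ^+ 2) ((c + d) / 2 - `|u - v| ^+ 2 / 4).
Proof.
move=> hu hv e e0; have [N1 h1] := hu e e0; have [N2 h2] := hv e e0.
exists (maxn N1 N2) => n hn; rewrite sqr_norm_midpoint.
have := h1 n (leq_trans (leq_maxl _ _) hn); have := h2 n (leq_trans (leq_maxr _ _) hn).
lra.
Qed.

Lemma limsup_le_sqr_dist_perturb u v C c d N :
  (forall n, `|z n - u| <= C) -> 0 <= d <= 1 ->
  (forall n, (N <= n)%N -> `|z n - v| <= `|z n - u| + d) ->
  limsup_le (fun n => `|z n - u| ^+ 2) c ->
  limsup_le (fun n => `|z n - v| ^+ 2) (c + d * (2 * C + 1)).
Proof.
move=> zC /andP[d0 d1] hv hu e e0; have [N' hN'] := hu e e0.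
exists (maxn N N') => n hn.
have hvn := hv n (leq_trans (leq_maxl _ _) hn).
have := hN' n (leq_trans (leq_maxr _ _) hn); have := zC n.
have : `|z n - v| ^+ 2 <= (`|z n - u| + d) ^+ 2.
  by rewrite lerXn2r ?nnegrE ?addr_ge0.
have := normr_ge0 (z n - u); nra.
Qed.

Lemma sqr_dist_le_of_minimal M u v c d :
  (forall w c', limsup_le (fun n => `|z n - w| ^+ 2) c' -> M <= c') ->
  limsup_le (fun n => `|z n - u| ^+ 2) c -> limsup_le (fun n => `|z n - v| ^+ 2) d ->
  `|u - v| ^+ 2 <= 2 * (c + d - 2 * M).
Proof. by move=> hM hu hv; have := hM _ _ (limsup_le_midpoint hu hv); lra. Qed.

Lemma minimizing_centers_cvg M (f : nat -> H * R) :
  (forall w c, limsup_le (fun n => `|z n - w| ^+ 2) c -> M <= c) ->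
  (forall k, limsup_le (fun n => `|z n - (f k).1| ^+ 2) (f k).2 /\
             (f k).2 < M + harmonic k) ->
  cvg ((fun k => (f k).1) @ \oo).
Proof.
move=> hM hf; apply: cauchy_cvg; apply: cauchy_exP => eps eps0.
have [K hK] : exists K, forall k, (K <= k)%N -> harmonic k <= eps ^+ 2 / 4.
  by apply: harmonic_le; rewrite divr_gt0 ?exprn_gt0.
exists (f K).1, K => // n hn; rewrite -ball_normE /ball_ /= -ltr_sqr ?nnegrE ?normr_ge0 ?ltW //.
have [hfK fK_lt] := hf K; have [hfn fn_lt] := hf n.
have := sqr_dist_le_of_minimal hM hfK hfn.
have := hK K (leqnn _); have := hK n hn.
lra.
Qed.

Lemma minimal_radius_ip_le0 A M w eps :
  (forall u c, limsup_le (fun n => `|z n - u| ^+ 2) c -> M <= c) ->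
  limsup_le (fun n => `|z n - A| ^+ 2) M ->
  (forall n, eps < ip (z n - A) w) -> eps <= 0.
Proof.
move=> hmin hA hw; rewrite leNgt; apply/negP => eps0.
(* moving the centre from [A] to [A + t w] would lower the radius *)
set t := eps / (`|w| ^+ 2 + 1).
have w1 : 0 < `|w| ^+ 2 + 1 by have := sqr_ge0 `|w|; lra.
have t0 : 0 < t by rewrite divr_gt0.
have tw : t ^+ 2 * `|w| ^+ 2 = t * eps - t ^+ 2.
  by rewrite /t; field; rewrite gt_eqF.
have teps : 0 < t * eps by rewrite mulr_gt0.
have : M <= M - 2 * t * eps + t ^+ 2 * `|w| ^+ 2.
  apply: (hmin (A + t *: w)) => e e0; have [N hN] := hA e e0; exists N => n hn.
  rewrite opprD addrA sqr_norm_sub_scale.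
  have : 2 * t * eps <= 2 * t * ip (z n - A) w by rewrite ler_pM2l ?mulr_gt0 // ltW.
  by have := hN n hn; lra.
have := sqr_ge0 t; lra.
Qed.

Variable B : R.
Hypothesis z_bounded : forall n, `|z n| <= B.

Lemma asymptotic_center_exists : exists A M, asymptotic_center z A M.
Proof.
have B0 : 0 <= B := le_trans (normr_ge0 _) (z_bounded 0%N).
set E := [set c | exists u, limsup_le (fun n => `|z n - u| ^+ 2) c].
have EB : E (B ^+ 2).
  exists 0 => e e0; exists 0%N => n _; rewrite subr0.
  have : `|z n| ^+ 2 <= B ^+ 2 by rewrite lerXn2r ?nnegrE.
  lra.
have E_lb : has_lbound E.
  by exists 0 => c [u hu]; apply: limsup_le_ge0 hu => n; apply: sqr_ge0.
set M := inf E.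
have M_min w c : limsup_le (fun n => `|z n - w| ^+ 2) c -> M <= c.
  by move=> hw; apply: (ge_inf E_lb); exists w.
have adh k : exists q : H * R,
    limsup_le (fun n => `|z n - q.1| ^+ 2) q.2 /\ q.2 < M + harmonic k.
  have [c [u hu] hc] := @inf_adherent _ E _ (harmonic_gt0 k) (conj (ex_intro _ _ EB) E_lb).
  by exists (u, c).
have [f hf] := choice adh.
have [A f_to_A] := (cvg_ex _).1 (minimizing_centers_cvg M_min hf).
exists A, M; split => //.
apply: (@limsup_le_approx _ _ _ (2 * (B + `|A| + 1) + 2)) => [|d /andP[d0 d1]].
  by have := normr_ge0 A; lra.
have [K1 hK1] := harmonic_le d0.
have /cvgrPdist_le /(_ d d0) [K2 _ hK2] := f_to_A.
set k := maxn K1 K2; have [hk k_lt] := hf k.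
have dA : `|A - (f k).1| <= d by apply: hK2; rewrite /= leq_maxr.
have dk : harmonic k <= d by apply: hK1; rewrite leq_maxl.
apply: limsup_le_trans (limsup_le_sqr_dist_perturb (v := A) (C := B + `|A| + 1)
  (N := 0%N) _ (introT andP (conj (ltW d0) d1)) _ hk) _.
- move=> n; apply: le_trans (ler_normB _ _) _.
  have : `|(f k).1| <= `|A| + `|A - (f k).1|.
    by rewrite -{1}[(f k).1](subKr A); apply: ler_normB.
  by have := z_bounded n; lra.
- move=> n _; rewrite -[z n - A](subrKA (f k).1).
  by apply: le_trans (ler_normD _ _) _; rewrite lerD2l distrC.
- lra.
Qed.

Lemma asymptotic_center_fixed S A M : nonexpansive S ->
  limsup_le (fun n => `|z n - S (z n)|) 0 -> asymptotic_center z A M -> S A = A.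
Proof.
move=> neS z_reg [hA A_min].
have B0 : 0 <= B := le_trans (normr_ge0 _) (z_bounded 0%N).
have hSA : limsup_le (fun n => `|z n - S A| ^+ 2) M.
  apply: (@limsup_le_approx _ _ _ (2 * (B + `|A|) + 1)) => [|d /andP[d0 d1]].
    by have := normr_ge0 A; lra.
  have [N hN] := z_reg d d0.
  apply: (limsup_le_sqr_dist_perturb (N := N) _ _ _ hA).
  - move=> n; apply: le_trans (ler_normB _ _) _; rewrite lerD2r; exact: z_bounded.
  - by rewrite (ltW d0) d1.
  - move=> n /hN; rewrite add0r => hn.
    rewrite -[z n - S A](subrKA (S (z n))); apply: le_trans (ler_normD _ _) _.
    by rewrite addrC lerD ?neS.
have := A_min _ _ (limsup_le_midpoint hA hSA).
have := sqr_ge0 `|A - S A|; move=> h0 h.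
have : `|A - S A| ^+ 2 = 0 by lra.
by move/eqP; rewrite sqrf_eq0 normr_eq0 subr_eq0 => /eqP.
Qed.

End AsymptoticCenter.

Section KrasnoselskiiMann.
Variables (S : H -> H) (mu : nat -> R) (x : nat -> H).
Hypothesis S_nonexpansive : nonexpansive S.
Hypothesis mu01 : forall n, 0 < mu n < 1.
Hypothesis x_next : forall n, x n.+1 = x n + mu n *: (S (x n) - x n).

Let mu_gap_ge0 n : 0 <= mu n * (1 - mu n).
Proof. by case/andP: (mu01 n) => m0 m1; rewrite mulr_ge0 ?subr_ge0 ?ltW. Qed.

Lemma km_fejer f n : S f = f ->
  `|x n.+1 - f| ^+ 2 <= `|x n - f| ^+ 2 - mu n * (1 - mu n) * `|x n - S (x n)| ^+ 2.
Proof.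
move=> Sf.
have -> : `|x n.+1 - f| ^+ 2 =
    `|x n - f| ^+ 2 - mu n * (1 - mu n) * `|x n - S (x n)| ^+ 2 +
    mu n * (`|S (x n) - f| ^+ 2 - `|x n - f| ^+ 2).
  by rewrite x_next -!ip_norm; ip_expand; ring.
rewrite gerDl; apply: mulr_ge0_le0; first by case/andP: (mu01 n) => /ltW.
by rewrite subr_le0 lerXn2r ?nnegrE // -{1}Sf.
Qed.

Lemma km_dist_nonincr f n : S f = f -> `|x n.+1 - f| ^+ 2 <= `|x n - f| ^+ 2.
Proof.
move=> Sf; apply: le_trans (km_fejer n Sf) _.
by rewrite gerBl mulr_ge0 ?sqr_ge0.
Qed.

Lemma km_dist_le f n : S f = f -> `|x n - f| <= `|x 0%N - f|.
Proof.
move=> Sf; elim: n => [|n IH] //.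
by apply: le_trans IH; rewrite -ler_sqr ?nnegrE // km_dist_nonincr.
Qed.

Lemma km_residual_nonincr n : `|x n.+1 - S (x n.+1)| <= `|x n - S (x n)|.
Proof.
have [m0 m1] := andP (mu01 n).
have -> : x n.+1 - S (x n.+1) =
    (1 - mu n) *: (x n - S (x n)) + (S (x n) - S (x n.+1)).
  by apply: eq_of_ip_sub; rewrite x_next; ip_expand; ring.
apply: le_trans (ler_normD _ _) _.
rewrite normrZ ger0_norm; last by rewrite subr_ge0 ltW.
have : `|S (x n) - S (x n.+1)| <= mu n * `|x n - S (x n)|.
  apply: le_trans (S_nonexpansive _ _) _.
  by rewrite x_next opprD addNKr normrN normrZ ger0_norm ?(ltW m0) // distrC.
rewrite mulrBl mul1r; lra.
Qed.

Lemma km_dist_telescope f e N : S f = f -> (forall n, e <= `|x n - S (x n)|) -> 0 <= e ->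
  `|x N - f| ^+ 2 <= `|x 0%N - f| ^+ 2 - e ^+ 2 * \sum_(n < N) mu n * (1 - mu n).
Proof.
move=> Sf he e0; elim: N => [|N IH]; first by rewrite big_ord0 mulr0 subr0.
rewrite big_ord_recr /= mulrDr.
have : e ^+ 2 * (mu N * (1 - mu N)) <= mu N * (1 - mu N) * `|x N - S (x N)| ^+ 2.
  by rewrite mulrC ler_wpM2l // lerXn2r ?nnegrE.
by have := km_fejer N Sf; lra.
Qed.

Lemma km_residual_limsup f : S f = f ->
  (forall K, exists N, K < \sum_(n < N) mu n * (1 - mu n)) ->
  limsup_le (fun n => `|x n - S (x n)|) 0.
Proof.
move=> Sf hdiv e e0; rewrite add0r.
suff [N hN] : exists N, `|x N - S (x N)| <= e.
  exists N => n hn; apply: le_trans hN.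
  by move/nonincreasing_seqP: km_residual_nonincr; apply.
apply: contrapT => /forallNP hgt.
have he n : e <= `|x n - S (x n)| by rewrite leNgt; apply/negP => /ltW /hgt.
have [N hN] := hdiv (`|x 0%N - f| ^+ 2 / e ^+ 2).
have := km_dist_telescope N Sf he (ltW e0).
have := sqr_ge0 `|x N - f|; move: hN; rewrite ltr_pdivrMr ?exprn_gt0 // mulrC.
lra.
Qed.

Lemma km_weak_cvg f : S f = f ->
  (forall K, exists N, K < \sum_(n < N) mu n * (1 - mu n)) ->
  exists2 A, S A = A & weak_cvg ip x A.
Proof.
move=> Sf hdiv; have x_reg := km_residual_limsup Sf hdiv.
have x_bounded n : `|x n| <= `|x 0%N - f| + `|f|.
  rewrite -[x n](subrK f); apply: le_trans (ler_normD _ _) _.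
  by rewrite lerD2r km_dist_le.
have [A [M [hA A_min]]] := asymptotic_center_exists x_bounded.
have SA := asymptotic_center_fixed x_bounded S_nonexpansive x_reg (conj hA A_min).
(* The centre [A'] of a subsequence drifting from [A] along [w] is a fixed
   point, so Fejer monotonicity gives [M <= M'] and [A] is also a centre of
   the subsequence; [minimal_radius_ip_le0] then excludes the drift. *)
have drift w : limsup_le (fun n => ip (x n - A) w) 0.
  apply: contrapT => /not_limsup_le_subseq [eps [phi [eps0 phi_ge hphi]]].
  have z_bounded n : `|(x \o phi) n| <= `|x 0%N - f| + `|f| := x_bounded (phi n).
  have [A' [M' [hA' A'_min]]] := asymptotic_center_exists z_bounded.
  have SA' : S A' = A'.
    exact: (asymptotic_center_fixed z_bounded S_nonexpansive
      (limsup_le_subseq phi_ge x_reg) (conj hA' A'_min)).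
  have M_le : M <= M'.
    apply: (A_min A' M' (nonincreasing_limsup_le_subseq _ phi_ge hA')).
    by move=> n; apply: km_dist_nonincr.
  have hAz : limsup_le (fun n => `|(x \o phi) n - A| ^+ 2) M'.
    exact: limsup_le_trans (limsup_le_subseq phi_ge hA) M_le.
  have := minimal_radius_ip_le0 A'_min hAz (fun n => hphi n).
  by rewrite add0r; lra.
exists A => // y; apply: cvg_of_limsup_le.
  by have := drift y; congr limsup_le; apply/funext => n; rewrite ipBl.
by have := drift (- y); congr limsup_le; apply/funext => n; rewrite ipNr ipBl opprB.
Qed.

End KrasnoselskiiMann.

Lemma averaged_km_weak_cvg (al : R) (S : H -> H) (lam : nat -> R) (x : nat -> H) :
  averaged al S -> Fix S !=set0 ->
  (forall n, 0 < lam n < 1 / al) ->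
  (\sum_(n <oo) (lam n * (1 / al - lam n))%:E = +oo)%E ->
  (forall n, x n.+1 = x n + lam n *: (S (x n) - x n)) ->
  exists2 A, S A = A & weak_cvg ip x A.
Proof.
case=> /andP[al0 al1] _ [Rop [Rop_nonexp hS]] [z Sz] lam_range lam_div x_next.
have S_Rop u : S u - u = al *: (Rop u - u).
  by apply: eq_of_ip_sub; rewrite hS; ip_expand; ring.
have Rop_fixed u : S u = u -> Rop u = u.
  move/eqP; rewrite -subr_eq0 S_Rop scaler_eq0 (gt_eqF al0) subr_eq0 /=.
  by move/eqP.
(* a relaxation [lam n] of [S] is the relaxation [al * lam n] of [Rop] *)
set mu := fun n => al * lam n.
have mu01 n : 0 < mu n < 1.
  case/andP: (lam_range n) => l0 l1.
  by rewrite mulr_gt0 //= -ltr_pdivlMl // mulr1 -div1r.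
have mu_next n : x n.+1 = x n + mu n *: (Rop (x n) - x n).
  by rewrite x_next S_Rop scalerA mulrC.
have mu_div K : exists N, K < \sum_(n < N) mu n * (1 - mu n).
  have g0 n : 0 <= lam n * (1 / al - lam n).
    by case/andP: (lam_range n) => l0 l1; rewrite mulr_ge0 ?subr_ge0 ?ltW.
  have [N hN] := nneseries_pinfty_partial_gt g0 lam_div (K / al ^+ 2).
  exists N; move: hN; rewrite ltr_pdivrMr ?exprn_gt0 // mulr_suml.
  congr (_ < _); apply: eq_bigr => n _; rewrite /mu.
  by field; rewrite gt_eqF.
have [A RA hA] := km_weak_cvg Rop_nonexp mu01 mu_next (Rop_fixed z Sz) mu_div.
by exists A => //; apply/eqP; rewrite -subr_eq0 S_Rop RA subrr scaler0.
Qed.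

End HilbertSpace.

Theorem proposition3p1 (R : realType) (H : completeNormedModType R)
  (ip : H -> H -> R) (hip : is_inner_product ip)
  (I : finType) (T : I -> H -> H) (a : I -> R)
  (p : nat) (m : 'I_p -> nat) (omega : 'I_p -> R)
  (idx : forall k : 'I_p, 'I_(m k) -> I) :
  (forall i, nonexpansive (T i)) ->
  (\bigcap_i Fix (T i)) !=set0 ->
  (forall i, 0 < a i < 1) ->
  (forall i, averaged (a i) (T i)) ->
  (0 < p)%N ->
  (forall k, (0 < m k)%N) ->
  (forall k, 0 < omega k <= 1) ->
  (forall i, exists k, exists l, idx k l = i) ->
  \sum_(k < p) omega k = 1 ->
  let Tb := Tbar T idx omega in
  let alpha := alpha_bar a idx omega in
  (averaged alpha Tb /\ Fix Tb = \bigcap_i Fix (T i)) /\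
  (forall (lam : nat -> R) (x : nat -> H),
     (forall n, 0 < lam n < 1 / alpha) ->
     (\sum_(n <oo) (lam n * (1 / alpha - lam n))%:E = +oo)%E ->
     (forall n, x n.+1 = x n + lam n *: (Tb (x n) - x n)) ->
     exists2 z, z \in \bigcap_i Fix (T i) & weak_cvg ip x z).
Proof.
(* The assumptions on [T i] and [a i] alone follow from averagedness. *)
move=> _ fix_ne _ T_avg p_gt0 m_gt0 omega_range idx_surj omega_sum1 Tb alpha.
have omega_gt0 k : 0 < omega k by case/andP: (omega_range k).
have Tb_avg : averaged alpha Tb :=
  averaged_Tbar hip idx T_avg m_gt0 omega_gt0 omega_sum1 p_gt0.
have Tb_fix : Fix Tb = \bigcap_i Fix (T i) :=
  Fix_Tbar hip T_avg m_gt0 omega_gt0 omega_sum1 fix_ne idx_surj.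
split=> // lam x lam_range lam_div x_next.
have [|z Tz hz] := averaged_km_weak_cvg hip Tb_avg _ lam_range lam_div x_next.
  by rewrite Tb_fix.
by exists z => //; rewrite inE -Tb_fix.
Qed.
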